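(* Let $p$ and $q$ be distinct primes and $n=pq$. Let $c_0,\ldots,c_{n-1}$ be integers such that $$\sum_{k=0}^{n-1}c_k\zeta_n^{-k}=\frac{1}{1-\zeta_n^{-1}}.$$ Let $a_0=0$ and, for $j=1,\ldots,n-1$, let $a_j=\frac{1}{\zeta_n^{-j}-1}+\sum_{k=0}^{n-1}c_k\zeta_n^{-jk}$. Then $G=\mathrm{Circ}(a_0,\ldots,a_{n-1})$ is a non-dense circulant (i.e. $a_j=0$ for some $j\in\{1,\ldots,n-1\}$) with universal perfect state transfer.
   Context: $\zeta_n=e^{2\pi\mathtt{i}/n}$. $\mathrm{Circ}(a_0,\ldots,a_{n-1})$ denotes the $n\times n$ matrix $C$ with $C_{j,k}=a_{k-j}$ (indices mod $n$), viewed as the adjacency matrix of a weighted graph. A graph with adjacency matrix $A$ has universal perfect state transfer if for every pair of vertices $v,w$ there is $t>0$ with $|\langle w|e^{-\mathtt{i} At}|v\rangle|=1$. A circulant is dense if $a_j\ne0$ for all $j=1,\ldots,n-1$. *)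

From HB Require Import structures.
From mathcomp Require Import all_boot all_order all_algebra.
From mathcomp Require Import all_classical all_reals all_analysis.
From mathcomp Require Import complex.
Set Implicit Arguments. Unset Strict Implicit. Unset Printing Implicit Defensive.
Import Order.TTheory GRing.Theory Num.Theory.
Import numFieldNormedType.Exports.
Local Open Scope ring_scope.
Local Open Scope complex_scope.

Definition zeta (R : realType) (n : nat) : R[i] :=
  (cos (2 * pi / n%:R)) +i* (sin (2 * pi / n%:R)).

Definition circ (R : realType) (n : nat) (a : nat -> R[i]) : 'M[R[i]]_n :=
  \matrix_(j, k) a ((k + n - j) %% n)%N.

Definition mexp_partial (R : realType) (n : nat) (M : 'M[R[i]]_n) (N : nat)
  : 'M[R[i]]_n := \sum_(k < N) ((k`!)%:R)^-1 *: M ^+ k.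

Definition mexp (R : realType) (n : nat) (M : 'M[R[i]]_n) : 'M[R[i]]_n :=
  \matrix_(i, j)
    ((limn (fun N => complex.Re (mexp_partial M N i j))) +i*
     (limn (fun N => complex.Im (mexp_partial M N i j)))).

Definition evol (R : realType) (n : nat) (A : 'M[R[i]]_n) (t : R) : 'M[R[i]]_n :=
  mexp (- ('i * t%:C) *: A).

Definition UPST (R : realType) (n : nat) (A : 'M[R[i]]_n) : Prop :=
  forall v w : 'I_n, exists t : R, 0 < t /\ `|evol A t w v| = 1.

From HB Require Import structures.
From mathcomp Require Import all_boot all_order all_algebra.
From mathcomp Require Import all_classical all_reals all_analysis.
From mathcomp Require Import complex ring lra zify.
Set Implicit Arguments. Unset Strict Implicit. Unset Printing Implicit Defensive.
Import Order.TTheory GRing.Theory Num.Theory.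
Import numFieldNormedType.Exports.
Local Open Scope classical_set_scope.
Local Open Scope ring_scope.
Local Open Scope complex_scope.

(* Put w = zeta_n^-1.  A circulant is diagonalised by the Fourier matrix
   F = (w^(-jm)): if a_l = 1/n sum_m lambda_m w^(ml) then
   Circ(a) = F diag(lambda) F^-1.  For the a_l of the theorem one finds
   lambda_m = m + n c_m - K, with K the mean of the m + n c_m: the term
   1/(w^l - 1) is the transform of the ramp m, and a_0 = 0 makes the
   eigenvalues sum to 0.  At time t = 2 pi s / n the phases e^(-i t lambda_m)
   are w^(sm) e^(itK), so e^(-iAt) is, up to a global phase, the cyclic shift
   by s, which moves any vertex to any other for a suitable s. *)

Section ExpI.
Variable R : realType.

Definition expi (x : R) : R[i] := cos x +i* sin x.

Lemma expiD x y : expi (x + y) = expi x * expi y.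
Proof. by rewrite /expi cosD sinD; simpc; rewrite [sin x * cos y + _]addrC. Qed.

Lemma norm_expi x : `|expi x| = 1.
Proof. by rewrite normc_def /= cos2Dsin2 sqrtr1. Qed.

Lemma expiN x : expi (- x) = (expi x)^-1.
Proof.
have expi_neq0 : expi x != 0 by rewrite -normr_eq0 norm_expi oner_eq0.
by apply: (mulfI expi_neq0); rewrite -expiD subrr divff // /expi cos0 sin0.
Qed.

Lemma expiMn x k : expi (x *+ k) = expi x ^+ k.
Proof.
elim: k => [|k IHk]; first by rewrite mulr0n expr0 /expi cos0 sin0.
by rewrite mulrS expiD IHk exprS.
Qed.

Lemma expi_2pi : expi (2 * pi) = 1.
Proof. by rewrite /expi mulr_natl cos2pi sin2pi. Qed.

Lemma expi_2pi_int (r : int) : expi (2 * pi * r%:~R) = 1.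
Proof.
case: r => k; first by rewrite -[Posz k]/(k%:Z) pmulrn mulr_natr expiMn expi_2pi expr1n.
by rewrite NegzE mulrNz mulrN expiN pmulrn mulr_natr expiMn expi_2pi expr1n invr1.
Qed.

Lemma expi_neq1 x : 0 < x < 2 * pi -> expi x != 1.
Proof.
move=> /andP[x_gt0 x_lt2pi]; apply/negP => /eqP[cos_x1 _].
have sin_half_gt0 : 0 < sin (x / 2).
  by apply: sin_gt0_pi; rewrite divr_gt0 //= ltr_pdivrMr // mulrC.
have := cos_mulr2n (x / 2); rewrite mulr2n -splitr cos_x1 => cos_half.
have sin_half0 : sin (x / 2) ^+ 2 = 0.
  by have := cos2Dsin2 (x / 2); move: cos_half; rewrite mulr2n; lra.
by move: sin_half_gt0; move/eqP: sin_half0; rewrite sqrf_eq0 => /eqP ->; rewrite ltxx.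
Qed.

Lemma zeta_expr n j : zeta R n ^+ j = expi (2 * pi / n%:R * j%:R).
Proof. by rewrite mulr_natr expiMn. Qed.

Lemma zeta_prim n : (0 < n)%N -> n.-primitive_root (zeta R n).
Proof.
move=> n_gt0; apply/andP; split => //; apply/forallP => i; rewrite unity_rootE.
rewrite zeta_expr; apply/eqP.
have n_neq0 : (n%:R : R) != 0 by rewrite pnatr_eq0 -lt0n.
have two_pi_gt0 : 0 < 2 * pi :> R by rewrite mulr_gt0 ?pi_gt0.
case: (ltngtP i.+1 n) => [i_lt|i_gt|->].
- apply/negbTE/expi_neq1; apply/andP; split.
    by apply: mulr_gt0; rewrite ?divr_gt0 ?ltr0n.
  by rewrite -mulrA gtr_pMr // mulrC ltr_pdivrMr ?ltr0n // mul1r ltr_nat.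
- by have := ltn_ord i; lia.
- by rewrite mulfVK // expi_2pi eqxx.
Qed.

End ExpI.

Lemma prim_rootV (F : fieldType) n (z : F) :
  n.-primitive_root z -> n.-primitive_root z^-1.
Proof.
move=> z_prim; apply/andP; split; first exact: prim_order_gt0 z_prim.
apply/forallP => i; rewrite unity_rootE exprVn invr_eq1 -(prim_order_dvd z_prim).
have := ltn_ord i; rewrite leq_eqVlt => /orP[/eqP ->|i_lt]; first by rewrite dvdnn eqxx.
by rewrite gtnNdvd // (ltn_eqF i_lt).
Qed.

Section RootOfUnitySums.
Variable F : fieldType.
Implicit Types x : F.

Lemma sum_expr_root_eq0 x n : x ^+ n = 1 -> x != 1 -> \sum_(m < n) x ^+ m = 0.
Proof.
move=> xn x_neq1; have := subrX1 x n; rewrite xn subrr => /esym/eqP.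
by rewrite mulf_eq0 subr_eq0 (negbTE x_neq1) /= => /eqP.
Qed.

Lemma sum_natr_expr x N :
  (x - 1) * \sum_(m < N) m%:R * x ^+ m = N%:R * x ^+ N - x * \sum_(m < N) x ^+ m.
Proof.
elim: N => [|N IHN]; first by rewrite !big_ord0; ring.
by rewrite !big_ord_recr /= mulrDr IHN mulrDr exprS; ring.
Qed.

Lemma sum_natr_expr_root x n : x ^+ n = 1 -> x != 1 ->
  (x - 1) * \sum_(m < n) m%:R * x ^+ m = n%:R.
Proof.
by move=> xn x_neq1; rewrite sum_natr_expr xn sum_expr_root_eq0 // mulr0 subr0 mulr1.
Qed.

End RootOfUnitySums.

Section ComplexLimits.
Variable R : realType.
Implicit Types (u : nat -> R[i]) (l : R[i]).

(* [mexp] takes limits of complex sequences componentwise, hence so does [cvgC]. *)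
Definition cvgC u l : Prop :=
  (fun N => complex.Re (u N)) @ \oo --> complex.Re l /\
  (fun N => complex.Im (u N)) @ \oo --> complex.Im l.

Lemma cvgC_lim u l : cvgC u l ->
  limn (fun N => complex.Re (u N)) +i* limn (fun N => complex.Im (u N)) = l.
Proof. by case: l => a b [/= /(cvg_lim _) -> // /(cvg_lim _) ->]. Qed.

Lemma cvgC_sum (I : Type) (r : seq I) (u : I -> nat -> R[i]) (l : I -> R[i]) :
  (forall i, cvgC (u i) (l i)) ->
  cvgC (fun N => \sum_(i <- r) u i N) (\sum_(i <- r) l i).
Proof.
move=> u_cvg; split; rewrite raddf_sum; under eq_fun do rewrite raddf_sum;
  by apply: cvg_big => [|i _]; [exact: add_continuous | case: (u_cvg i)].
Qed.

Lemma cvgCMl b u l : cvgC u l -> cvgC (fun N => b * u N) (b * l).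
Proof.
have ReM x y : complex.Re (x * y) = complex.Re x * complex.Re y - complex.Im x * complex.Im y.
  by case: x => ? ?; case: y => ? ?.
have ImM x y : complex.Im (x * y) = complex.Re x * complex.Im y + complex.Im x * complex.Re y.
  by case: x => ? ?; case: y => ? ?.
move=> [u_re u_im]; split; rewrite ?ReM ?ImM; under eq_fun do rewrite ?ReM ?ImM.
- by apply: cvgB; apply: cvgM => //; exact: cvg_cst.
- by apply: cvgD; apply: cvgM => //; exact: cvg_cst.
Qed.

Definition exp_partial N (x : R[i]) : R[i] := \sum_(k < N) (k`!%:R)^-1 * x ^+ k.

Lemma exprNi k : (- 'i : R[i]) ^+ k =
  ((~~ odd k)%:R * (-1) ^+ k./2) +i* (- ((odd k)%:R * (-1) ^+ k.-1./2)).
Proof.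
have exprNi_double h : (- 'i : R[i]) ^+ h.*2 = ((-1) ^+ h)%:C.
  elim: h => [|h IHh]; first by rewrite expr0.
  by rewrite doubleS !exprS mulrA IHh rmorphM /= rmorphN1; simpc.
have := odd_double_half k; case: (odd k) => /= kE.
- have halfE : k.-1./2 = k./2 by rewrite -{1}kE add1n /= doubleK.
  rewrite -{1}kE add1n exprS halfE exprNi_double; simpc; congr Complex; ring.
- by rewrite -{1}kE add0n exprNi_double; simpc.
Qed.

Lemma Re_exp_partial (t : R) N :
  complex.Re (exp_partial N (- 'i * t%:C)) = series (cos_coeff t) N.
Proof.
rewrite /exp_partial /series /= raddf_sum big_mkord; apply: eq_bigr => k _.
rewrite exprMn -rmorphXn /= -(rmorph_nat (real_complex R)) -fmorphV /= exprNi /=.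
by simpc; rewrite /cos_coeff /= -exprnP; ring.
Qed.

Lemma Im_exp_partial (t : R) N :
  complex.Im (exp_partial N (- 'i * t%:C)) = - series (sin_coeff t) N.
Proof.
rewrite /exp_partial /series /= raddf_sum big_mkord -sumrN; apply: eq_bigr => k _.
rewrite exprMn -rmorphXn /= -(rmorph_nat (real_complex R)) -fmorphV /= exprNi /=.
by simpc; rewrite /sin_coeff /= ?exprnP; ring.
Qed.

Lemma cvgC_exp_partial (t : R) :
  cvgC (fun N => exp_partial N (- 'i * t%:C)) (expi (- t)).
Proof.
split; rewrite /= ?cosN ?sinN.
- under eq_fun do rewrite Re_exp_partial.
  by have := @is_cvg_series_cos_coeff R t; rewrite unlock.
- under eq_fun do rewrite Im_exp_partial.
  by apply: cvgN; have := @is_cvg_series_sin_coeff R t; rewrite unlock.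
Qed.

End ComplexLimits.

Lemma conj_diag_expr (C : pzRingType) n (P Q : 'M[C]_n) (d : 'rV[C]_n) k :
  P *m Q = 1%:M -> Q *m P = 1%:M ->
  (P *m diag_mx d *m Q) ^+ k = P *m diag_mx (\row_m (d 0 m ^+ k)) *m Q.
Proof.
move=> PQ QP; elim: k => [|k IHk].
  have -> : \row_m (d 0 m ^+ 0) = const_mx 1 by apply/matrixP => i j; rewrite !mxE.
  by rewrite diag_const_mx mulmx1 PQ.
rewrite exprSr IHk -!mulmxE -!mulmxA (mulmxA Q) QP mul1mx (mulmxA (diag_mx _)) mulmx_diag.
by congr (_ *m (diag_mx _ *m _)); apply/matrixP => i j; rewrite !mxE exprSr.
Qed.

Section ConjugateOfDiagonal.
Variables (R : realType) (n : nat) (P Q : 'M[R[i]]_n).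
Hypothesis PQ : P *m Q = 1%:M.

Lemma mexp_partial_conj_diag (d : 'rV[R[i]]_n) N j k :
  mexp_partial (P *m diag_mx d *m Q) N j k =
  \sum_m P j m * Q m k * exp_partial N (d 0 m).
Proof.
rewrite /mexp_partial summxE.
under eq_bigr do rewrite mxE (conj_diag_expr _ _ PQ (mulmx1C PQ)) mul_mx_diag !mxE mulr_sumr.
rewrite exchange_big /=; apply: eq_bigr => m _.
rewrite /exp_partial mulr_sumr; apply: eq_bigr => i _; rewrite !mxE; ring.
Qed.

Lemma evol_conj_diag (theta : 'I_n -> R) t j k :
  evol (P *m diag_mx (\row_m (theta m)%:C) *m Q) t j k =
  \sum_m P j m * Q m k * expi (- (t * theta m)).
Proof.
rewrite /evol; set d := \row_m _.
have -> : - ('i * t%:C) *: (P *m diag_mx d *m Q) = P *m diag_mx (- ('i * t%:C) *: d) *m Q.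
  by rewrite scalemxAl scalemxAr; congr (_ *m _ *m _); rewrite linearZ.
rewrite /mexp mxE; apply: cvgC_lim.
under eq_fun do rewrite mexp_partial_conj_diag.
apply: cvgC_sum => m; apply: cvgCMl.
have -> : (- ('i * t%:C) *: d) 0 m = - 'i * (t * theta m)%:C.
  by rewrite !mxE rmorphM /=; ring.
exact: cvgC_exp_partial.
Qed.

End ConjugateOfDiagonal.

Section Fourier.
Variables (R : realType) (n : nat) (w : R[i]).
Hypothesis w_prim : n.-primitive_root w.

Definition fourier_mx : 'M[R[i]]_n := \matrix_(j, m) w ^+ ((n - j) * m).
Definition fourier_inv_mx : 'M[R[i]]_n := \matrix_(m, k) (n%:R^-1 * w ^+ (m * k)).

Lemma fourier_phase_sum (j k : 'I_n) s :
  \sum_m fourier_mx j m * fourier_inv_mx m k * w ^+ (s * m) =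
  (n %| n - j + k + s)%:R.
Proof.
have n_neq0 : (n%:R : R[i]) != 0 by rewrite pnatr_eq0 -lt0n (prim_order_gt0 w_prim).
set x := w ^+ (n - j + k + s).
have termE (m : 'I_n) :
    fourier_mx j m * fourier_inv_mx m k * w ^+ (s * m) = n%:R^-1 * x ^+ m.
  rewrite !mxE mulrAC mulrCA -!exprD /x -exprM; congr (_ * w ^+ _).
  by rewrite !mulnDl (mulnC m k) addnAC.
under eq_bigr do rewrite termE.
rewrite -mulr_sumr (prim_order_dvd w_prim) -/x.
have [->|x_neq1] := eqVneq x 1.
  by under eq_bigr do rewrite expr1n; rewrite sumr_const card_ord mulVf.
rewrite sum_expr_root_eq0 ?mulr0 //.
by rewrite /x exprAC (prim_expr_order w_prim) expr1n.
Qed.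

Lemma fourier_mxK : fourier_mx *m fourier_inv_mx = 1%:M.
Proof.
apply/matrixP => j k; rewrite !mxE.
have := fourier_phase_sum j k 0; under eq_bigr do rewrite mul0n expr0 mulr1.
move=> ->; rewrite addn0; congr (nat_of_bool _)%:R.
apply/idP/eqP => [|->]; last by rewrite subnK ?dvdnn // ltnW.
have := ltn_ord j; have := ltn_ord k => k_lt j_lt /dvdnP[q qE].
apply: val_inj => /=; have : (q < 2)%N by nia.
by case: q qE => [|[|//]]; lia.
Qed.

Lemma circ_fourier (a lambda : nat -> R[i]) :
  (forall l, (l < n)%N -> a l = n%:R^-1 * \sum_(m < n) lambda m * w ^+ (m * l)) ->
  circ n a = fourier_mx *m diag_mx (\row_m lambda m) *m fourier_inv_mx.
Proof.
move=> aE; apply/matrixP => j k.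
rewrite mul_mx_diag !mxE aE ?ltn_mod ?(prim_order_gt0 w_prim) // mulr_sumr.
apply: eq_bigr => m _; rewrite !mxE.
suff -> : w ^+ (m * ((k + n - j) %% n)) = w ^+ ((n - j) * m) * w ^+ (m * k) by ring.
rewrite -exprD; apply/eqP; rewrite (eq_prim_root_expr w_prim) modnMmr.
by rewrite [(k + n)%N]addnC -addnBAC ?(ltnW (ltn_ord j)) // mulnDr mulnC.
Qed.

End Fourier.

Section CirculantSpectrum.
Variables (R : realType) (n : nat) (w : R[i]) (c : nat -> int).
Hypothesis w_prim : n.-primitive_root w.

Definition circ_coef (l : nat) : R[i] :=
  if l == 0%N then 0 else (w ^+ l - 1)^-1 + \sum_(k < n) (c k)%:~R * w ^+ (l * k).

Definition eigen_mean : R := n%:R^-1 * \sum_(m < n) (m%:R + n%:R * (c m)%:~R).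

Definition circ_eigen (m : nat) : R := m%:R + n%:R * (c m)%:~R - eigen_mean.

Let n_gt0 : (0 < n)%N := prim_order_gt0 w_prim.

Lemma sum_circ_eigen : \sum_(m < n) circ_eigen m = 0.
Proof.
rewrite /circ_eigen /eigen_mean sumrB sumr_const card_ord -[(_^-1 * _) *+ n]mulr_natl.
by rewrite mulrA mulfV ?mul1r ?subrr // pnatr_eq0 -lt0n.
Qed.

Lemma circ_coef_dft l : (l < n)%N ->
  circ_coef l = n%:R^-1 * \sum_(m < n) (circ_eigen m)%:C * w ^+ (m * l).
Proof.
move=> l_lt; rewrite /circ_coef; have [->|l_neq0] := eqVneq l 0%N.
  under eq_bigr do rewrite muln0 expr0 mulr1.
  by rewrite -rmorph_sum sum_circ_eigen mulr0.
set x := w ^+ l.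
have xn : x ^+ n = 1 by rewrite /x exprAC (prim_expr_order w_prim) expr1n.
have x_neq1 : x != 1.
  by rewrite /x -(prim_order_dvd w_prim) gtnNdvd // lt0n.
under eq_bigr do rewrite exprM -/x.
under [in RHS]eq_bigr do rewrite mulnC exprM -/x /circ_eigen !rmorphB rmorphD rmorphM
  /= !rmorph_nat (rmorph_int (real_complex R)) !mulrDl mulNr -mulrA.
rewrite !big_split /= sumrN -!mulr_sumr sum_expr_root_eq0 // mulr0 subr0.
have -> : \sum_(m < n) m%:R * x ^+ m = n%:R / (x - 1).
  by rewrite -(sum_natr_expr_root xn x_neq1) [(x - 1) * _]mulrC mulfK // subr_eq0.
by field; rewrite pnatr_eq0 -lt0n n_gt0 subr_eq0 x_neq1.
Qed.

Lemma circ_coef_fourier : circ n circ_coef =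
  fourier_mx n w *m diag_mx (\row_m (circ_eigen m)%:C) *m fourier_inv_mx n w.
Proof.
apply: (circ_fourier (lambda := fun m => (circ_eigen m)%:C) w_prim).
exact: circ_coef_dft.
Qed.

End CirculantSpectrum.

Lemma UPST_fourier_int_spectrum (R : realType) n (e : nat -> int) (K : R) :
  (0 < n)%N ->
  let w := (zeta R n)^-1 in
  UPST (fourier_mx n w *m
        diag_mx (\row_m (m%:R + n%:R * (e m)%:~R - K)%:C) *m fourier_inv_mx n w).
Proof.
move=> n_gt0 w; have w_prim : n.-primitive_root w by exact/prim_rootV/zeta_prim.
move=> v u; set s := (u + n - v)%N; set t : R := 2 * pi / n%:R * s%:R.
have n_neq0 : (n%:R : R) != 0 by rewrite pnatr_eq0 -lt0n.
have phaseE (m : nat) : expi (- (t * (m%:R + n%:R * (e m)%:~R - K))) =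
                        w ^+ (s * m) * expi (t * K).
  have -> : - (t * (m%:R + n%:R * (e m)%:~R - K)) =
            - (2 * pi / n%:R * (s * m)%:R) + (2 * pi * (- e m)%:~R) *+ s + t * K.
    by rewrite /t natrM -[(_ * (- e m)%:~R) *+ s]mulr_natr mulrNz; field.
  by rewrite !expiD expiN expiMn expi_2pi_int expr1n mulr1 -zeta_expr /w exprVn.
have s_gt0 : (0 < s)%N by rewrite /s; have := ltn_ord v; lia.
exists t; split; first by apply: mulr_gt0; rewrite ?divr_gt0 ?mulr_gt0 ?ltr0n ?pi_gt0.
rewrite (evol_conj_diag (fourier_mxK w_prim)).
under eq_bigr do rewrite phaseE mulrA.
rewrite -mulr_suml fourier_phase_sum // normrM norm_expi mulr1.
suff -> : (n - u + v + s)%N = (2 * n)%N by rewrite dvdn_mull ?dvdnn ?normr1.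
by have := ltn_ord u; have := ltn_ord v; rewrite /s; lia.
Qed.

Theorem proposition1 (R : realType) (p q : nat) (c : nat -> int) :
  prime p -> prime q -> p != q ->
  let n := (p * q)%N in
  let z := zeta R n in
  \sum_(k < n) (c k)%:~R * z ^- k = (1 - z^-1)^-1 ->
  let a := fun j : nat =>
    if j == 0%N then 0
    else (z ^- j - 1)^-1 + \sum_(k < n) (c k)%:~R * z ^- (j * k) in
  (exists j : nat, (0 < j < n)%N /\ a j = 0) /\ UPST (circ n a).
Proof.
move=> p_prime q_prime _ n z c_sum a.
have n_gt1 : (1 < n)%N.
  by rewrite (leq_trans (prime_gt1 p_prime)) // leq_pmulr // prime_gt0.
split.
  exists 1%N; split; first by rewrite n_gt1.
  rewrite /a /=; under eq_bigr do rewrite mul1n.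
  by rewrite c_sum expr1 -opprB invrN addNr.
have -> : a = circ_coef n z^-1 c.
  apply: funext => l; rewrite /a /circ_coef exprVn.
  by under [in RHS]eq_bigr do rewrite exprVn.
rewrite circ_coef_fourier; last exact/prim_rootV/zeta_prim/ltnW.
exact: UPST_fourier_int_spectrum (ltnW n_gt1).
Qed.
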